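(* If $(H,R)$ is a semiquasitriangular Hopf algebra, then for all $h\in H$ $$\nu(h)= R^{(2)}h_2R'^{(2)}\otimes S^{2}(R'^{(1)})S(h_1)S(R^{(1)})h_3 = R^{(1)}h_2S(R'^{(1)})\otimes S(h_1)R^{(2)}h_3R'^{(2)}.$$
   Context: All vector spaces are over a field $k$, $\otimes=\otimes_k$. For a Hopf algebra $H$ with comultiplication $\Delta$, counit $\epsilon$, antipode $S$, we use Sweedler notation $\Delta(h)=h_1\otimes h_2$, $(\Delta\otimes\mathrm{id})\Delta(h)=h_1\otimes h_2\otimes h_3$, etc. $\operatorname{Z}(H)$ is the centre of $H$. For $R\in H\otimes H$ we write $R=R^{(1)}\otimes R^{(2)}$ (summation understood); $R'^{(1)}\otimes R'^{(2)}$ denotes another copy of $R$. Definition (semiquasitriangular Hopf algebra): a pair $(H,R)$ with $H$ a Hopf algebra with bijective antipode and $R\in H\otimes H$ invertible such that (1) $R^{(1)}_1\otimes R^{(1)}_2\otimes R^{(2)} = R^{(1)}\otimes R'^{(1)}\otimes R^{(2)}R'^{(2)}$; (2) $R^{(1)}\otimes R^{(2)}_1\otimes R^{(2)}_2 = R^{(1)}R'^{(1)}\otimes R'^{(2)}\otimes R^{(2)}$; (3) $R^{(1)}\otimes R^{(2)}_2R'^{(1)}\otimes R^{(2)}_1R'^{(2)} = R^{(1)}\otimes R'^{(1)}R^{(2)}_1\otimes R'^{(2)}R^{(2)}_2$; (4) $R^{(1)}_2R'^{(1)}\otimes R^{(1)}_1R'^{(2)}\otimes R^{(2)} = R'^{(1)}R^{(1)}_1\otimes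 R'^{(2)}R^{(1)}_2\otimes R^{(2)}$; (5) $\nu(h):=R^{(2)}h_2R'^{(2)}\otimes S(h_1)S(R^{(1)})h_3R'^{(1)}\in H\otimes\operatorname{Z}(H)$ for all $h\in H$; (6) $\nu(h)=R^{(1)}h_2R'^{(1)}\otimes S(R'^{(2)})S(h_1)R^{(2)}h_3$ for all $h\in H$. The map $\nu:H\to H\otimes H$ in the claim is the one defined in (5). *)

(* An element of H (x) H (resp. H (x) H (x) H) is represented by a finite
   Sweedler-style sum, and equality of tensors is tested through the universal
   property of the tensor product: two finite sums of pure tensors are equal in
   H (x) H iff every k-bilinear map H x H -> W (W any k-vector space) takes the
   same value on them (similarly with trilinear maps for H (x) H (x) H). *)
From HB Require Import structures.
From mathcomp Require Import all_boot all_order all_algebra.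
Set Implicit Arguments. Unset Strict Implicit. Unset Printing Implicit Defensive.
Import GRing.Theory.
Local Open Scope ring_scope.

Section Hopf.
Variables (k : fieldType) (H : algType k).

Definition bilin (W : lmodType k) (phi : H -> H -> W) : Prop :=
  forall (c : k) (x y z : H),
    phi (c *: x + y) z = c *: phi x z + phi y z /\
    phi z (c *: x + y) = c *: phi z x + phi z y.

Definition trilin (W : lmodType k) (phi : H -> H -> H -> W) : Prop :=
  forall (c : k) (x y u v : H),
    phi (c *: x + y) u v = c *: phi x u v + phi y u v /\
    phi u (c *: x + y) v = c *: phi u x v + phi u y v /\
    phi u v (c *: x + y) = c *: phi u v x + phi u v y.

Definition central (z : H) : Prop := forall y : H, z * y = y * z.

Record is_hopf (Delta : H -> seq (H * H)) (eps : H -> k) (S : H -> H) : Prop := {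
  Delta_lin : forall (c : k) (x y : H) (W : lmodType k) (phi : H -> H -> W),
    bilin phi ->
    \sum_(d <- Delta (c *: x + y)) phi d.1 d.2
    = c *: \sum_(d <- Delta x) phi d.1 d.2 + \sum_(d <- Delta y) phi d.1 d.2;
  Delta_coassoc : forall (h : H) (W : lmodType k) (phi : H -> H -> H -> W),
    trilin phi ->
    \sum_(d <- Delta h) \sum_(e <- Delta d.1) phi e.1 e.2 d.2
    = \sum_(d <- Delta h) \sum_(e <- Delta d.2) phi d.1 e.1 e.2;
  Delta_mul : forall (x y : H) (W : lmodType k) (phi : H -> H -> W),
    bilin phi ->
    \sum_(d <- Delta (x * y)) phi d.1 d.2
    = \sum_(d <- Delta x) \sum_(e <- Delta y) phi (d.1 * e.1) (d.2 * e.2);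
  Delta_one : forall (W : lmodType k) (phi : H -> H -> W),
    bilin phi -> \sum_(d <- Delta 1) phi d.1 d.2 = phi 1 1;
  eps_lin : forall (c : k) (x y : H), eps (c *: x + y) = c * eps x + eps y;
  eps_mul : forall x y : H, eps (x * y) = eps x * eps y;
  eps_one : eps 1 = 1;
  counit_l : forall h : H, \sum_(d <- Delta h) eps d.1 *: d.2 = h;
  counit_r : forall h : H, \sum_(d <- Delta h) eps d.2 *: d.1 = h;
  S_lin : forall (c : k) (x y : H), S (c *: x + y) = c *: S x + S y;
  antipode_l : forall h : H, \sum_(d <- Delta h) S d.1 * d.2 = (eps h)%:A;
  antipode_r : forall h : H, \sum_(d <- Delta h) d.1 * S d.2 = (eps h)%:A;
  S_bij : bijective S
}.

(* nu(h) = R^(2) h_2 R'^(2) (x) S(h_1) S(R^(1)) h_3 R'^(1), tested on phi;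
   h_1 (x) h_2 (x) h_3 = (Delta (x) id) Delta h. *)
Definition nu_app (Delta : H -> seq (H * H)) (S : H -> H) (R : seq (H * H))
    (h : H) (W : lmodType k) (phi : H -> H -> W) : W :=
  \sum_(r <- R) \sum_(q <- R) \sum_(d <- Delta h) \sum_(e <- Delta d.1)
    phi (r.2 * e.2 * q.2) (S e.1 * S r.1 * d.2 * q.1).

Record semiquasitriangular (Delta : H -> seq (H * H)) (eps : H -> k)
    (S : H -> H) (R : seq (H * H)) : Prop := {
  sqt_hopf : is_hopf Delta eps S;
  sqt_inv : exists Ri : seq (H * H),
    (forall (W : lmodType k) (phi : H -> H -> W), bilin phi ->
       \sum_(r <- R) \sum_(q <- Ri) phi (r.1 * q.1) (r.2 * q.2) = phi 1 1) /\
    (forall (W : lmodType k) (phi : H -> H -> W), bilin phi ->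
       \sum_(q <- Ri) \sum_(r <- R) phi (q.1 * r.1) (q.2 * r.2) = phi 1 1);
  sqt1 : forall (W : lmodType k) (phi : H -> H -> H -> W), trilin phi ->
    \sum_(r <- R) \sum_(d <- Delta r.1) phi d.1 d.2 r.2
    = \sum_(r <- R) \sum_(q <- R) phi r.1 q.1 (r.2 * q.2);
  sqt2 : forall (W : lmodType k) (phi : H -> H -> H -> W), trilin phi ->
    \sum_(r <- R) \sum_(d <- Delta r.2) phi r.1 d.1 d.2
    = \sum_(r <- R) \sum_(q <- R) phi (r.1 * q.1) q.2 r.2;
  sqt3 : forall (W : lmodType k) (phi : H -> H -> H -> W), trilin phi ->
    \sum_(r <- R) \sum_(d <- Delta r.2) \sum_(q <- R) phi r.1 (d.2 * q.1) (d.1 * q.2)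
    = \sum_(r <- R) \sum_(d <- Delta r.2) \sum_(q <- R) phi r.1 (q.1 * d.1) (q.2 * d.2);
  sqt4 : forall (W : lmodType k) (phi : H -> H -> H -> W), trilin phi ->
    \sum_(r <- R) \sum_(d <- Delta r.1) \sum_(q <- R) phi (d.2 * q.1) (d.1 * q.2) r.2
    = \sum_(r <- R) \sum_(d <- Delta r.1) \sum_(q <- R) phi (q.1 * d.1) (q.2 * d.2) r.2;
  (* (5): nu(h) lies in H (x) Z(H) *)
  sqt5 : forall h : H, exists s : seq (H * H), (forall p, p \in s -> central p.2) /\
    forall (W : lmodType k) (phi : H -> H -> W), bilin phi ->
      \sum_(p <- s) phi p.1 p.2 = nu_app Delta S R h phi;
  sqt6 : forall (h : H) (W : lmodType k) (phi : H -> H -> W), bilin phi ->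
    nu_app Delta S R h phi
    = \sum_(r <- R) \sum_(q <- R) \sum_(d <- Delta h) \sum_(e <- Delta d.1)
        phi (r.1 * e.2 * q.1) (S q.2 * S e.1 * r.2 * d.2)
}.

End Hopf.

From HB Require Import structures.
From mathcomp Require Import all_boot all_order all_algebra.
Import GRing.Theory.
Local Open Scope ring_scope.
Set Implicit Arguments. Unset Strict Implicit.

(* Conditions (1), (2) and the invertibility of R give (eps (x) id)(R) = 1 = (id (x) eps)(R),
   and with the antipode axioms the identity R (S (x) id)(R) = 1 (x) 1 and two variants of it.
   Multiplying nu(h) by such a factor cancels R'; as the second leg of nu(h) is central by (5),
   the factor may be moved to the left of that leg, and cancelling instead with the variant
   involving S^2 gives the first formula. The second formula follows in the same way from the
   expression (6) of nu(h). *)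

Section Multilinear.
Variables (k : fieldType) (H : algType k).

Definition lin (V : lmodType k) (f : H -> V) : Prop :=
  forall (c : k) (x y : H), f (c *: x + y) = c *: f x + f y.

Variable W : lmodType k.

Lemma linZ (f : H -> W) c x : lin f -> f (c *: x) = c *: f x.
Proof.
move=> hf; have f0 : f 0 = 0 by move: (hf (-1) 0 0); rewrite !scaleN1r !addNr.
by rewrite -[c *: x]addr0 hf f0 addr0.
Qed.

Lemma lin_sum (f : H -> W) (I : Type) (s : seq I) (g : I -> H) :
  lin f -> f (\sum_(i <- s) g i) = \sum_(i <- s) f (g i).
Proof.
move=> hf; have f0 : f 0 = 0 by rewrite -(scale0r 0) linZ // scale0r.
have fD x y : f (x + y) = f x + f y by move: (hf 1 x y); rewrite !scale1r.
by elim: s => [|i s IHs]; rewrite ?big_nil ?big_cons ?fD ?IHs.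
Qed.

Lemma lin_comp (f : H -> W) (g : H -> H) :
  lin f -> lin g -> lin (fun x => f (g x)).
Proof. by move=> hf hg c x y; rewrite hg hf. Qed.

Lemma lin_sumf (I : Type) (s : seq I) (f : I -> H -> W) :
  (forall i, lin (f i)) -> lin (fun x => \sum_(i <- s) f i x).
Proof.
by move=> hf c x y; rewrite scaler_sumr -big_split; apply: eq_bigr => i _; rewrite hf.
Qed.

Lemma lin_scale (f : H -> W) (a : k) : lin f -> lin (fun x => a *: f x).
Proof. by move=> hf c x y; rewrite hf scalerDr !scalerA mulrC. Qed.

Lemma bilin_lin_l (phi : H -> H -> W) z : bilin phi -> lin (phi ^~ z).
Proof. by move=> hphi c x y; case: (hphi c x y z). Qed.

Lemma bilin_lin_r (phi : H -> H -> W) z : bilin phi -> lin (phi z).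
Proof. by move=> hphi c x y; case: (hphi c x y z). Qed.

Lemma bilinP (phi : H -> H -> W) :
  (forall z, lin (phi ^~ z)) -> (forall z, lin (phi z)) -> bilin phi.
Proof. by move=> hl hr c x y z; split; [apply: hl | apply: hr]. Qed.

Lemma bilin_sum (I : Type) (s : seq I) (phi : I -> H -> H -> W) :
  (forall i, bilin (phi i)) -> bilin (fun a b => \sum_(i <- s) phi i a b).
Proof.
move=> hphi; apply: bilinP => z; apply: lin_sumf => i;
  [exact: bilin_lin_l | exact: bilin_lin_r].
Qed.

Lemma trilinP (phi : H -> H -> H -> W) :
  (forall u v, lin (fun x => phi x u v)) -> (forall u v, lin (fun x => phi u x v)) ->
  (forall u v, lin (fun x => phi u v x)) -> trilin phi.
Proof.
by move=> h1 h2 h3 c x y u v; split; [|split]; [apply: h1 | apply: h2 | apply: h3].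
Qed.

End Multilinear.

Ltac linearity hopf := let c := fresh in let x := fresh in let y := fresh in
  move=> c x y /=;
  rewrite ?(mulrDl, mulrDr, S_lin hopf, eps_lin hopf, scalerDl, scalerDr,
            (fun a u v => esym (scalerAl a u v)), (fun a u v => esym (scalerAr a u v)),
            scalerA, addrA);
  rewrite ?[_ * c]mulrC.

Ltac bilinearity hopf hchi := apply: bilinP => ?;
  first [ by apply: (lin_comp (bilin_lin_l _ hchi)); linearity hopf
        | by apply: (lin_comp (bilin_lin_r _ hchi)); linearity hopf ].

Section HopfAlgebra.
Variables (k : fieldType) (H : algType k) (Delta : H -> seq (H * H)) (eps : H -> k)
  (S : H -> H).
Hypothesis hopf : is_hopf Delta eps S.

Lemma antipode_l_lin (W : lmodType k) (f : H -> W) y : lin f ->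
  \sum_(g <- Delta y) f (S g.1 * g.2) = eps y *: f 1.
Proof. by move=> hf; rewrite -lin_sum // (antipode_l hopf) (linZ _ _ hf). Qed.

Lemma antipode_r_lin (W : lmodType k) (f : H -> W) y : lin f ->
  \sum_(g <- Delta y) f (g.1 * S g.2) = eps y *: f 1.
Proof. by move=> hf; rewrite -lin_sum // (antipode_r hopf) (linZ _ _ hf). Qed.

Lemma counit_l_lin (W : lmodType k) (f : H -> W) y : lin f ->
  \sum_(g <- Delta y) eps g.1 *: f g.2 = f y.
Proof.
move=> hf; rewrite -{2}(counit_l hopf y) lin_sum //.
by apply: eq_bigr => g _; rewrite (linZ _ _ hf).
Qed.

Lemma counit_r_lin (W : lmodType k) (f : H -> W) y : lin f ->
  \sum_(g <- Delta y) eps g.2 *: f g.1 = f y.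
Proof.
move=> hf; rewrite -{2}(counit_r hopf y) lin_sum //.
by apply: eq_bigr => g _; rewrite (linZ _ _ hf).
Qed.

Lemma lin_eps_scale (W : lmodType k) (w : W) : lin (fun x => eps x *: w).
Proof. by move=> c x y; rewrite (eps_lin hopf) scalerDl scalerA. Qed.

Lemma antipode1 : S 1 = 1.
Proof.
have := antipode_l hopf 1; rewrite (Delta_one hopf (phi := fun a b => S a * b)).
  by rewrite mulr1 (eps_one hopf) scale1r.
by apply: bilinP => z; linearity hopf.
Qed.

Section AntipodeAntimultiplicative.
Variables a b : H.

(* [conv] is S(a1 b1) a2 b2 S(b3) S(a3): cancelling the inner pairs first gives
   S(b) S(a), cancelling the outer pairs first gives S(ab). *)
Let conv3 x y z := \sum_(e <- Delta b) \sum_(e' <- Delta e.1)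
  S (x * e'.1) * (y * e'.2) * S e.2 * S z.
Let conv := \sum_(d <- Delta a) \sum_(d' <- Delta d.1) conv3 d'.1 d'.2 d.2.

Lemma conv_antipode_inner : conv = S b * S a.
Proof.
rewrite /conv /conv3.
transitivity (\sum_(d <- Delta a) \sum_(e <- Delta b)
    ((eps e.1 *: S e.2) * (eps d.1 *: S d.2))); last first.
  under eq_bigr do rewrite -mulr_suml.
  rewrite (counit_l_lin (f := S)); last by linearity hopf.
  by rewrite -mulr_sumr (counit_l_lin (f := S)) //; linearity hopf.
apply: eq_bigr => d _; rewrite exchange_big; apply: eq_bigr => e _.
rewrite -(Delta_mul hopf d.1 e.1 (phi := fun x y => S x * y * S e.2 * S d.2)); last first.
  by apply: bilinP => z; linearity hopf.
rewrite (antipode_l_lin (f := fun t => t * S e.2 * S d.2)); last by linearity hopf.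
rewrite (eps_mul hopf) mul1r -scalerAl -scalerAr scalerA; congr (_ *: _); exact: mulrC.
Qed.

Lemma conv_antipode_outer : conv = S (a * b).
Proof.
rewrite /conv (Delta_coassoc hopf a (phi := conv3)); last first.
  apply: trilinP => u v; rewrite /conv3;
    by apply: lin_sumf => e; apply: lin_sumf => e'; linearity hopf.
transitivity (\sum_(d <- Delta a) eps d.2 *: S (d.1 * b)); last first.
  by rewrite (counit_r_lin (f := fun x => S (x * b))) //; linearity hopf.
apply: eq_bigr => d _.
transitivity (\sum_(d' <- Delta d.2) S (d.1 * b) * (d'.1 * S d'.2)); last first.
  by rewrite (antipode_r_lin (f := fun t => S (d.1 * b) * t)) ?mulr1 //; linearity hopf.
apply: eq_bigr => d' _; rewrite /conv3.
rewrite (Delta_coassoc hopf b (phi := fun x y z => S (d.1 * x) * (d'.1 * y) * S z * S d'.2));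
  last by apply: trilinP => u v; linearity hopf.
transitivity (\sum_(e <- Delta b) eps e.2 *: (S (d.1 * e.1) * d'.1 * S d'.2)).
  apply: eq_bigr => e _.
  transitivity (\sum_(e' <- Delta e.2) S (d.1 * e.1) * d'.1 * (e'.1 * S e'.2) * S d'.2).
    by apply: eq_bigr => g _; rewrite !mulrA.
  rewrite (antipode_r_lin (f := fun t => S (d.1 * e.1) * d'.1 * t * S d'.2)) ?mulr1 //.
  by linearity hopf.
rewrite (counit_r_lin (f := fun x => S (d.1 * x) * d'.1 * S d'.2)); last by linearity hopf.
by rewrite mulrA.
Qed.

End AntipodeAntimultiplicative.

Lemma antipodeM a b : S (a * b) = S b * S a.
Proof. by rewrite -conv_antipode_outer conv_antipode_inner. Qed.

End HopfAlgebra.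

Section SemiQuasitriangular.
Variables (k : fieldType) (H : algType k) (Delta : H -> seq (H * H)) (eps : H -> k)
  (S : H -> H) (R : seq (H * H)).
Hypothesis sqt : semiquasitriangular Delta eps S R.
Let hopf := sqt_hopf sqt.

Lemma R_mul_counit_l (W : lmodType k) (psi : H -> H -> W) : bilin psi ->
  \sum_(r <- R) psi r.1 r.2 = \sum_(q <- R) psi q.1 ((\sum_(r <- R) eps r.1 *: r.2) * q.2).
Proof.
move=> hpsi; have heps : trilin (fun x y z => eps x *: psi y z).
  apply: trilinP => u v /=; [exact (lin_eps_scale hopf _)
    | exact (lin_scale _ (bilin_lin_l v hpsi)) | exact (lin_scale _ (bilin_lin_r v hpsi))].
transitivity (\sum_(r <- R) \sum_(d <- Delta r.1) eps d.1 *: psi d.2 r.2).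
  by apply: eq_bigr => r _; rewrite (counit_l_lin hopf (f := psi^~ r.2)) //; exact: bilin_lin_l.
rewrite (sqt1 sqt heps) exchange_big; apply: eq_bigr => q _ /=.
rewrite mulr_suml (lin_sum (f := psi q.1)); last exact: bilin_lin_r.
by apply: eq_bigr => r _; rewrite -scalerAl (linZ _ _ (bilin_lin_r _ hpsi)).
Qed.

Lemma R_mul_counit_r (W : lmodType k) (psi : H -> H -> W) : bilin psi ->
  \sum_(r <- R) psi r.1 r.2 = \sum_(q <- R) psi ((\sum_(r <- R) eps r.2 *: r.1) * q.1) q.2.
Proof.
move=> hpsi; have heps : trilin (fun x y z => eps z *: psi x y).
  apply: trilinP => u v /=; [exact (lin_scale _ (bilin_lin_l u hpsi))
    | exact (lin_scale _ (bilin_lin_r u hpsi)) | exact (lin_eps_scale hopf _)].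
transitivity (\sum_(r <- R) \sum_(d <- Delta r.2) eps d.2 *: psi r.1 d.1).
  by apply: eq_bigr => r _; rewrite (counit_r_lin hopf (f := psi r.1)) //; exact: bilin_lin_r.
rewrite (sqt2 sqt heps) exchange_big; apply: eq_bigr => q _ /=.
rewrite mulr_suml (lin_sum (f := psi^~ q.2)); last exact: bilin_lin_l.
by apply: eq_bigr => r _; rewrite -scalerAl (linZ _ _ (bilin_lin_l _ hpsi)).
Qed.

(* Multiply on the right by R^-1 and apply eps (x) id (resp. id (x) eps below). *)
Lemma R_mul_cancel_r (x : H) :
  (forall (W : lmodType k) (psi : H -> H -> W), bilin psi ->
     \sum_(r <- R) psi r.1 r.2 = \sum_(r <- R) psi r.1 (x * r.2)) -> x = 1.
Proof.
move=> hx; have [Ri [RRi _]] := sqt_inv sqt.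
have := hx _ (fun a b => \sum_(v <- Ri) eps (a * v.1) *: (b * v.2)).
rewrite (RRi _ (fun a b => eps a *: b)); last by apply: bilinP => z; linearity hopf.
under [in RHS]eq_bigr do under eq_bigr do rewrite -mulrA.
rewrite (RRi _ (fun a b => eps a *: (x * b))); last by apply: bilinP => z; linearity hopf.
rewrite /= (eps_one hopf) !scale1r mulr1 => -> //.
by apply: bilin_sum => v; apply: bilinP => z; linearity hopf.
Qed.

Lemma R_mul_cancel_l (x : H) :
  (forall (W : lmodType k) (psi : H -> H -> W), bilin psi ->
     \sum_(r <- R) psi r.1 r.2 = \sum_(r <- R) psi (x * r.1) r.2) -> x = 1.
Proof.
move=> hx; have [Ri [RRi _]] := sqt_inv sqt.
have := hx _ (fun a b => \sum_(v <- Ri) eps (b * v.2) *: (a * v.1)).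
rewrite (RRi _ (fun a b => eps b *: a)); last by apply: bilinP => z; linearity hopf.
under [in RHS]eq_bigr do under eq_bigr do rewrite -mulrA.
rewrite (RRi _ (fun a b => eps b *: (x * a))); last by apply: bilinP => z; linearity hopf.
rewrite /= (eps_one hopf) !scale1r mulr1 => -> //.
by apply: bilin_sum => v; apply: bilinP => z; linearity hopf.
Qed.

Lemma R_counit_l : \sum_(r <- R) eps r.1 *: r.2 = 1.
Proof. exact/R_mul_cancel_r/R_mul_counit_l. Qed.

Lemma R_counit_r : \sum_(r <- R) eps r.2 *: r.1 = 1.
Proof. exact/R_mul_cancel_l/R_mul_counit_r. Qed.

Lemma R_mul_SR (W : lmodType k) (chi : H -> H -> W) : bilin chi ->
  \sum_(q <- R) \sum_(w <- R) chi (q.1 * S w.1) (q.2 * w.2) = chi 1 1.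
Proof.
move=> hchi; have htri : trilin (fun x y z => chi (x * S y) z).
  apply: trilinP => u v; last exact: bilin_lin_r;
    by apply: (lin_comp (bilin_lin_l _ hchi)); linearity hopf.
transitivity (chi 1 (\sum_(r <- R) eps r.1 *: r.2)); last by rewrite R_counit_l.
rewrite -(sqt1 sqt htri) (lin_sum (f := chi 1)); last exact: bilin_lin_r.
apply: eq_bigr => r _ /=.
rewrite (antipode_r_lin hopf (f := chi^~ r.2)); last exact: bilin_lin_l.
by rewrite (linZ _ _ (bilin_lin_r 1 hchi)).
Qed.

Lemma R_mul_RS (W : lmodType k) (chi : H -> H -> W) : bilin chi ->
  \sum_(q <- R) \sum_(w <- R) chi (q.1 * w.1) (w.2 * S q.2) = chi 1 1.
Proof.
move=> hchi; have htri : trilin (fun x y z => chi x (y * S z)).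
  apply: trilinP => u v; first exact: bilin_lin_l;
    by apply: (lin_comp (bilin_lin_r _ hchi)); linearity hopf.
transitivity (chi (\sum_(r <- R) eps r.2 *: r.1) 1); last by rewrite R_counit_r.
rewrite -(sqt2 sqt htri) (lin_sum (f := chi^~ 1)); last exact: bilin_lin_l.
apply: eq_bigr => r _ /=.
rewrite (antipode_r_lin hopf (f := chi r.1)); last exact: bilin_lin_r.
by rewrite (linZ _ _ (bilin_lin_l 1 hchi)).
Qed.

Lemma S2R_mul_SR (W : lmodType k) (chi : H -> H -> W) : bilin chi ->
  \sum_(w <- R) \sum_(p <- R) chi (S (S p.1) * S w.1) (w.2 * p.2) = chi 1 1.
Proof.
move=> hchi; have htri : trilin (fun x y z => chi (S (S y) * S x) z).
  apply: trilinP => u v; last exact: bilin_lin_r;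
    by apply: (lin_comp (bilin_lin_l _ hchi)); linearity hopf.
transitivity (chi 1 (\sum_(r <- R) eps r.1 *: r.2)); last by rewrite R_counit_l.
rewrite -(sqt1 sqt htri) (lin_sum (f := chi 1)); last exact: bilin_lin_r.
apply: eq_bigr => r _ /=.
under eq_bigr do rewrite -(antipodeM hopf).
rewrite (antipode_r_lin hopf (f := fun t => chi (S t) r.2)); last first.
  by apply: (lin_comp (bilin_lin_l _ hchi)); linearity hopf.
by rewrite (antipode1 hopf) (linZ _ _ (bilin_lin_r 1 hchi)).
Qed.

Lemma exchange_big_Delta2 (W : lmodType k) (I : Type) (s : seq I) h
    (F : H * H -> H * H -> I -> W) :
  \sum_(d <- Delta h) \sum_(e <- Delta d.1) \sum_(i <- s) F d e i
  = \sum_(i <- s) \sum_(d <- Delta h) \sum_(e <- Delta d.1) F d e i.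
Proof. by under eq_bigr do rewrite exchange_big; rewrite exchange_big. Qed.

Lemma exchange_big_R2_Delta2 (W : lmodType k) (I : Type) (s : seq I) h
    (F : I -> H * H -> H * H -> H * H -> H * H -> W) :
  \sum_(i <- s) \sum_(r <- R) \sum_(q <- R) \sum_(d <- Delta h) \sum_(e <- Delta d.1) F i r q d e
  = \sum_(r <- R) \sum_(q <- R) \sum_(d <- Delta h) \sum_(e <- Delta d.1) \sum_(i <- s) F i r q d e.
Proof.
rewrite exchange_big; apply: eq_bigr => r _; rewrite exchange_big; apply: eq_bigr => q _.
by rewrite exchange_big; apply: eq_bigr => d _; rewrite exchange_big.
Qed.

Lemma nu_app_central h (W : lmodType k) (psi : H -> H -> W) (u : H) : bilin psi ->
  nu_app Delta S R h (fun a b => psi a (b * u)) = nu_app Delta S R h (fun a b => psi a (u * b)).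
Proof.
move=> hpsi; have [s [s_central nuE]] := sqt5 sqt h.
rewrite -!nuE; [|bilinearity hopf hpsi..].
by apply: eq_big_seq => p /s_central ->.
Qed.

Lemma nu5_drop_R' h (W : lmodType k) (psi : H -> H -> W) : bilin psi ->
  \sum_(r <- R) \sum_(d <- Delta h) \sum_(e <- Delta d.1) psi (r.2 * e.2) (S e.1 * S r.1 * d.2)
  = \sum_(w <- R) nu_app Delta S R h (fun a b => psi (a * w.2) (S w.1 * b)).
Proof.
move=> hpsi.
transitivity
  (\sum_(w <- R) nu_app Delta S R h (fun a b => psi (a * w.2) (b * S w.1))); last first.
  apply: eq_bigr => w _; apply: (@nu_app_central h _ (fun a b => psi (a * w.2) b)).
  bilinearity hopf hpsi.
rewrite /nu_app exchange_big_R2_Delta2; apply: eq_bigr => r _.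
have SR_cancel F G :
    \sum_(q <- R) \sum_(w <- R) psi (F * (q.2 * w.2)) (G * (q.1 * S w.1)) = psi F G.
  by rewrite (R_mul_SR (chi := fun x y => psi (F * y) (G * x))) ?mulr1 //;
    bilinearity hopf hpsi.
under eq_bigr do under eq_bigr do rewrite -SR_cancel.
rewrite exchange_big_Delta2; apply: eq_bigr => q _; apply: eq_bigr => d _; apply: eq_bigr => e _.
by apply: eq_bigr => w _; rewrite !mulrA.
Qed.

Lemma nu6_drop_R' h (W : lmodType k) (psi : H -> H -> W) : bilin psi ->
  \sum_(r <- R) \sum_(d <- Delta h) \sum_(e <- Delta d.1) psi (r.1 * e.2) (S e.1 * r.2 * d.2)
  = \sum_(x <- R) nu_app Delta S R h (fun a b => psi (a * x.1) (b * x.2)).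
Proof.
move=> hpsi.
transitivity
  (\sum_(x <- R) nu_app Delta S R h (fun a b => psi (a * x.1) (x.2 * b))); last first.
  apply: eq_bigr => x _; symmetry; apply: (@nu_app_central h _ (fun a b => psi (a * x.1) b)).
  bilinearity hopf hpsi.
transitivity (\sum_(x <- R) \sum_(r <- R) \sum_(q <- R) \sum_(d <- Delta h)
   \sum_(e <- Delta d.1) psi (r.1 * e.2 * q.1 * x.1) (x.2 * (S q.2 * S e.1 * r.2 * d.2)));
  last first.
  apply: eq_bigr => x _; rewrite (sqt6 sqt h (phi := fun a b => psi (a * x.1) (x.2 * b))) //.
  bilinearity hopf hpsi.
rewrite exchange_big_R2_Delta2; apply: eq_bigr => r _.
have RS_cancel F G :
    \sum_(q <- R) \sum_(x <- R) psi (F * (q.1 * x.1)) (x.2 * S q.2 * G) = psi F G.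
  by rewrite (R_mul_RS (chi := fun x y => psi (F * x) (y * G))) ?mulr1 ?mul1r //;
    bilinearity hopf hpsi.
under eq_bigr do under eq_bigr do rewrite -RS_cancel.
rewrite exchange_big_Delta2; apply: eq_bigr => q _; apply: eq_bigr => d _; apply: eq_bigr => e _.
by apply: eq_bigr => x _; rewrite !mulrA.
Qed.

Lemma nu_app_S2 h (W : lmodType k) (phi : H -> H -> W) : bilin phi ->
  nu_app Delta S R h phi
  = \sum_(r <- R) \sum_(q <- R) \sum_(d <- Delta h) \sum_(e <- Delta d.1)
        phi (r.2 * e.2 * q.2) (S (S q.1) * S e.1 * S r.1 * d.2).
Proof.
move=> hphi; pose psi a b := \sum_(p <- R) phi (a * p.2) (S (S p.1) * b).
have hpsi : bilin psi by apply: bilin_sum => p; bilinearity hopf hphi.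
transitivity (\sum_(r <- R) \sum_(d <- Delta h) \sum_(e <- Delta d.1)
   psi (r.2 * e.2) (S e.1 * S r.1 * d.2)); last first.
  apply: eq_bigr => r _; rewrite exchange_big_Delta2; apply: eq_bigr => q _.
  by apply: eq_bigr => d _; apply: eq_bigr => e _; rewrite !mulrA.
rewrite (nu5_drop_R' h hpsi) /nu_app exchange_big_R2_Delta2.
apply: eq_bigr => r _; apply: eq_bigr => q _; apply: eq_bigr => d _; apply: eq_bigr => e _.
have S2R_cancel F G :
    \sum_(w <- R) \sum_(p <- R) phi (F * (w.2 * p.2)) (S (S p.1) * S w.1 * G) = phi F G.
  by rewrite (S2R_mul_SR (chi := fun x y => phi (F * y) (x * G))) ?mulr1 ?mul1r //;
    bilinearity hopf hphi.
rewrite -S2R_cancel; apply: eq_bigr => w _; apply: eq_bigr => p _.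
by rewrite !mulrA.
Qed.

Lemma nu_app_SR h (W : lmodType k) (phi : H -> H -> W) : bilin phi ->
  nu_app Delta S R h phi
  = \sum_(r <- R) \sum_(q <- R) \sum_(d <- Delta h) \sum_(e <- Delta d.1)
        phi (r.1 * e.2 * S q.1) (S e.1 * r.2 * d.2 * q.2).
Proof.
move=> hphi; pose psi a b := \sum_(p <- R) phi (a * S p.1) (b * p.2).
have hpsi : bilin psi by apply: bilin_sum => p; bilinearity hopf hphi.
transitivity (\sum_(r <- R) \sum_(d <- Delta h) \sum_(e <- Delta d.1)
   psi (r.1 * e.2) (S e.1 * r.2 * d.2)); last first.
  by apply: eq_bigr => r _; rewrite exchange_big_Delta2.
rewrite (nu6_drop_R' h hpsi) /nu_app exchange_big_R2_Delta2.
apply: eq_bigr => r _; apply: eq_bigr => q _; apply: eq_bigr => d _; apply: eq_bigr => e _.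
have SR_cancel F G :
    \sum_(w <- R) \sum_(p <- R) phi (F * (w.1 * S p.1)) (G * (w.2 * p.2)) = phi F G.
  by rewrite (R_mul_SR (chi := fun x y => phi (F * x) (G * y))) ?mulr1 //;
    bilinearity hopf hphi.
rewrite -SR_cancel; apply: eq_bigr => w _; apply: eq_bigr => p _.
by rewrite !mulrA.
Qed.

End SemiQuasitriangular.

Theorem proposition1p9 (k : fieldType) (H : algType k)
    (Delta : H -> seq (H * H)) (eps : H -> k) (S : H -> H) (R : seq (H * H)) :
  semiquasitriangular Delta eps S R ->
  forall (h : H) (W : lmodType k) (phi : H -> H -> W), bilin phi ->
    nu_app Delta S R h phi
    = \sum_(r <- R) \sum_(q <- R) \sum_(d <- Delta h) \sum_(e <- Delta d.1)
        phi (r.2 * e.2 * q.2) (S (S q.1) * S e.1 * S r.1 * d.2)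
  /\
    nu_app Delta S R h phi
    = \sum_(r <- R) \sum_(q <- R) \sum_(d <- Delta h) \sum_(e <- Delta d.1)
        phi (r.1 * e.2 * S q.1) (S e.1 * r.2 * d.2 * q.2).
Proof.
move=> sqt h W phi hphi.
split; [exact (nu_app_S2 sqt h hphi) | exact (nu_app_SR sqt h hphi)].
Qed.
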